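(* Let $n\ge 1$, $A\in\mathbb{R}^{n\times n}$ and $C\in\mathbb{R}^{1\times n}$, with $(A,C)$ an observable pair and all eigenvalues of $A$ nonzero. Let $t_1,\ldots,t_n$ be nonnegative integers such that the matrix with rows $CA^{t_1},\ldots,CA^{t_n}$ has rank less than $n$. Then for every positive integer $\Delta$ that is not a pathological sampling period of $A$, the matrix with rows $CA^{t_1},\ldots,CA^{t_n},CA^{t_1+\Delta},\ldots,CA^{t_n+\Delta}$ has strictly larger rank than the matrix with rows $CA^{t_1},\ldots,CA^{t_n}$.
   Context: Setting: discrete-time single-output system $x(t+1)=Ax(t)+Bu(t)$, $y(t)=Cx(t)+Du(t)$ with output measured at selected time instances; matrices with rows $CA^{t_i}$ are sample-based observability matrices. $(A,C)$ observable means the matrix with rows $C,CA,\ldots,CA^{n-1}$ has rank $n$. A positive integer $h$ is a pathological sampling period of $A$ if there exist two distinct eigenvalues $\lambda_p\neq\lambda_q$ of $A$ in different Jordan blocks with $\lambda_p^h=\lambda_q^h$. *)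

From HB Require Import structures.
From mathcomp Require Import all_boot all_order all_algebra.
From mathcomp Require Import reals.
From mathcomp Require Import complex.
Set Implicit Arguments. Unset Strict Implicit. Unset Printing Implicit Defensive.
Import Order.TTheory GRing.Theory Num.Theory.
Local Open Scope ring_scope.

Definition cmx (R : realType) (n : nat) (A : 'M[R]_n) : 'M[R[i]]_n :=
  map_mx (fun x : R => (x%:C)%C) A.

Definition ceig (R : realType) (n : nat) (A : 'M[R]_n) (l : R[i]) : Prop :=
  eigenvalue (cmx A) l.

Definition sample_obs (R : realType) (n k : nat) (A : 'M[R]_n) (C : 'rV[R]_n)
  (t : 'I_k -> nat) : 'M[R]_(k, n) :=
  \matrix_(i < k) (C *m A ^+ t i).

Definition obs_mx (R : realType) (n : nat) (A : 'M[R]_n) (C : 'rV[R]_n)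
  : 'M[R]_n := sample_obs A C (fun i : 'I_n => nat_of_ord i).

Definition observable (R : realType) (n : nat) (A : 'M[R]_n) (C : 'rV[R]_n)
  : Prop := \rank (obs_mx A C) = n.

(* h is a pathological sampling period of A: there are two distinct
   eigenvalues (hence lying in different Jordan blocks) with equal h-th powers. *)
Definition pathological (R : realType) (n : nat) (A : 'M[R]_n) (h : nat)
  : Prop :=
  (0 < h)%N /\
  exists lp lq : R[i], [/\ ceig A lp, ceig A lq, lp != lq & lp ^+ h = lq ^+ h].

From HB Require Import structures.
From mathcomp Require Import all_boot all_order all_algebra.
From mathcomp Require Import reals.
From mathcomp Require Import complex.
Import Order.TTheory GRing.Theory Num.Theory.
Local Open Scope ring_scope.
Set Implicit Arguments. Unset Strict Implicit. Unset Printing Implicit Defensive.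

(* Put B := A ^+ Delta.  If adding the shifted samples does not increase the
   rank, the row space of the sample matrix O is B-invariant.  The minimal
   polynomial of A divides p_B(X^Delta), and z |-> z^Delta is injective with
   nonvanishing derivative on the spectrum of A (nonzero eigenvalues, Delta
   not pathological), so every root of p_A of multiplicity m yields a root of
   p_B of multiplicity at least m: deg p_A <= deg p_B.  The algebra generated
   by B lies in the one generated by A and has dimension deg p_B, hence the
   two coincide and A is a polynomial in B; so O is A-invariant.  Containing
   C A^(t_1), it then contains the rows of (obs_mx A C) A^(t_1), which has
   rank n because A is invertible, contradicting rank O < n. *)

Lemma sub_hornerC_factor (R : comNzRingType) (q : {poly R}) (l : R) :
  exists2 h : {poly R}, q - (q.[l])%:P = h * ('X - l%:P) & h.[l] = q^`().[l].
Proof.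
have /factor_theorem [h qh] : root (q - (q.[l])%:P) l.
  by rewrite rootE !hornerE subrr.
exists h => //; have := congr1 (fun p => p^`().[l]) qh.
rewrite /= derivB derivC subr0 derivM derivXsubC !hornerE.
by rewrite subrr mulr0 add0r => <-.
Qed.

Section CompositionDivisibility.

Variable F : closedFieldType.
Implicit Types P Q S q : {poly F}.

Lemma dvdp_comp_XsubC P Q S q l :
    P = Q * ('X - l%:P) -> {in root P &, injective (horner q)} ->
    q^`().[l] != 0 -> P %| S \Po q ->
  exists2 S1, S = S1 * ('X - (q.[l])%:P) & Q %| S1 \Po q.
Proof.
move=> PQ q_inj q'l PS.
have rootPl : root P l by rewrite PQ rootM root_XsubC eqxx orbT.
have rootQP x : root Q x -> root P x by rewrite PQ rootM => ->.
have /factor_theorem [S1 SS1] : root S q.[l].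
  by have := root_dvdp PS rootPl; rewrite /root horner_comp.
exists S1 => //; have [h qh h_l] := sub_hornerC_factor q l.
have Qh : coprimep Q h.
  apply: Pdiv.ClosedField.root_coprimep => x rootQx.
  apply: contraNneq q'l => hx0.
  suff xl : x = l by rewrite -h_l -xl hx0.
  apply: q_inj; [exact: rootQP | exact: rootPl | apply/eqP].
  rewrite -subr_eq0; have := congr1 (horner^~ x) qh.
  by rewrite /= !hornerE hx0 mul0r => <-.
have XsubC_neq0 : 'X - l%:P != 0 by rewrite polyXsubC_eq0.
rewrite -(Gauss_dvdpl _ Qh) -(dvdp_mul2r _ _ XsubC_neq0) -mulrA -qh -PQ.
have -> : (S1 \Po q) * (q - (q.[l])%:P) = S \Po q.
  by rewrite SS1 comp_polyM comp_polyB comp_polyX comp_polyC.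
exact: PS.
Qed.

Lemma size_dvdp_comp P S q :
    S != 0 -> {in root P &, injective (horner q)} ->
    (forall a, root P a -> q^`().[a] != 0) -> P %| S \Po q ->
  (size P <= size S)%N.
Proof.
move: {2}(size P) (leqnn (size P)) => k.
elim: k P S => [|k IH] P S sizeP S0 q_inj q'_neq0 PS.
  by rewrite (leq_trans sizeP).
have [P_const|P_nonconst] := leqP (size P) 1.
  by rewrite (leq_trans P_const) // size_poly_gt0.
have P0 : P != 0 by rewrite -size_poly_gt0 ltnW.
have /closed_rootP [l rootPl] : size P != 1 by rewrite gtn_eqF.
have /factor_theorem [Q PQ] := rootPl.
have rootQP x : root Q x -> root P x by rewrite PQ rootM => ->.
have [S1 SS1 QS1] := dvdp_comp_XsubC PQ q_inj (q'_neq0 l rootPl) PS.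
have S10 : S1 != 0 by apply: contraNneq S0 => S10; rewrite SS1 S10 mul0r.
move: sizeP; rewrite PQ SS1 !size_Mmonic ?monicXsubC //; last first.
  by apply: contraNneq P0 => Q0; rewrite PQ Q0 mul0r.
rewrite !size_XsubC !addn2 !ltnS => sizeQ; apply: IH sizeQ S10 _ _ QS1.
- by move=> x y /rootQP rx /rootQP ry; apply: q_inj.
- by move=> a /rootQP; apply: q'_neq0.
Qed.

End CompositionDivisibility.

Lemma horner_mx_comp (R : comNzRingType) n (A : 'M[R]_n.+1) (p q : {poly R}) :
  horner_mx A (p \Po q) = horner_mx (horner_mx A q) p.
Proof.
elim/poly_ind: p => [|p c IH]; first by rewrite comp_poly0 !rmorph0.
rewrite comp_polyD comp_polyM comp_polyX comp_polyC !rmorphD !rmorphM /= IH.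
by rewrite !horner_mx_X !horner_mx_C.
Qed.

Lemma mxminpoly_dvdp_comp (F : fieldType) n (A : 'M[F]_n.+1) (q : {poly F}) :
  mxminpoly A %| mxminpoly (horner_mx A q) \Po q.
Proof. by apply: mxminpoly_min; rewrite horner_mx_comp mx_root_minpoly. Qed.

Lemma degree_mxminpoly_horner (F : closedFieldType) n (A : 'M[F]_n.+1)
    (q : {poly F}) :
    {in eigenvalue A &, injective (horner q)} ->
    (forall a, eigenvalue A a -> q^`().[a] != 0) ->
  (degree_mxminpoly A <= degree_mxminpoly (horner_mx A q))%N.
Proof.
move=> q_inj q'_neq0; rewrite -ltnS -size_mxminpoly.
rewrite -(size_mxminpoly (horner_mx A q)).
apply: size_dvdp_comp (mxminpoly_dvdp_comp A q).
- exact: monic_neq0 (mxminpoly_monic _).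
- by move=> a b ra rb; apply: q_inj; rewrite -topredE /= eigenvalue_root_min.
- by move=> a; rewrite -eigenvalue_root_min; apply: q'_neq0.
Qed.

Lemma stablemx_from_horner_mx (F : fieldType) m n (A : 'M[F]_n.+1)
    (q : {poly F}) (V : 'M[F]_(m.+1, n.+1)) :
    (degree_mxminpoly A <= degree_mxminpoly (horner_mx A q))%N ->
  stablemx V (horner_mx A q) -> stablemx V A.
Proof.
set B := horner_mx A q; set dA := degree_mxminpoly A.
set dB := degree_mxminpoly B => le_dA_dB stableB.
have B_powers_sub : (powers_mx B dB <= powers_mx A dA)%MS.
  by apply/row_subP => i; rewrite rowK -rmorphXn; apply: horner_mx_mem.
have A_powers_sub : (powers_mx A dA <= powers_mx B dB)%MS.
  rewrite -(geq_leqif (mxrank_leqif_sup B_powers_sub)).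
  by rewrite (eqP (minpoly_mx_free A)) (eqP (minpoly_mx_free B)).
have A_in_B : (A \in powers_mx B dB)%MS.
  apply: submx_trans A_powers_sub.
  by have := horner_mx_mem A 'X; rewrite horner_mx_X.
by rewrite -(mx_inv_hornerK A_in_B); apply: horner_mx_stable.
Qed.

Lemma unitmx_eigenvalue0 (F : fieldType) n (A : 'M[F]_n) :
  (A \in unitmx) = ~~ eigenvalue A 0.
Proof.
rewrite eigenvalue_root_char rootE horner_coef0 char_poly_det unitmxE unitfE.
by rewrite mulf_eq0 signr_eq0.
Qed.

Lemma stablemx_rank_col_mx (F : fieldType) m n (V : 'M[F]_(m, n)) (f : 'M_n) :
  (\rank (col_mx V (V *m f)) <= \rank V)%N -> stablemx V f.
Proof.
have V_sub : (V <= col_mx V (V *m f))%MS by rewrite -addsmxE addsmxSl.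
rewrite (geq_leqif (mxrank_leqif_sup V_sub)).
by rewrite col_mx_sub => /andP[].
Qed.

Lemma submx_mulmxX_stable (F : fieldType) m p n (U : 'M[F]_(m, n))
    (V : 'M_(p, n)) (A : 'M_n) k :
  (U <= V)%MS -> stablemx V A -> (U *m A ^+ k <= V)%MS.
Proof.
move=> UV stableA; elim: k => [|k IH]; first by rewrite expr0 mulmx1.
by rewrite exprSr -mulmxE mulmxA (submx_trans (submxMr A IH)).
Qed.

Lemma cmxE (R : realType) n (A : 'M[R]_n) : cmx A = map_mx (real_complex R) A.
Proof. by []. Qed.

Section SampledObservability.

Variables (R : realType) (n : nat) (A : 'M[R]_n.+1) (C : 'rV[R]_n.+1).

Lemma sample_obs_shift k (t : 'I_k -> nat) D :
  sample_obs A C (fun i => (t i + D)%N) = sample_obs A C t *m A ^+ D.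
Proof.
by apply/row_matrixP => i; rewrite row_mul !rowK exprD -mulmxE mulmxA.
Qed.

Lemma sample_obs_stable_full k (t : 'I_k -> nat) (i : 'I_k) :
    observable A C -> A \in unitmx -> stablemx (sample_obs A C t) A ->
  \rank (sample_obs A C t) = n.+1.
Proof.
move=> obsAC A_unit stableA; apply/eqP; rewrite eqn_leq rank_leq_col /=.
have AX_free : row_free (A ^+ t i) by rewrite row_free_unit unitrX.
rewrite -[X in (X <= _)%N]obsAC -(mxrankMfree _ AX_free).
apply/mxrankS/row_subP => j; rewrite row_mul rowK -mulmxA mulmxE -exprD addnC.
rewrite exprD -mulmxE mulmxA -[C *m _](rowK (fun i => C *m A ^+ t i)).
exact: submx_mulmxX_stable (row_sub i _) stableA.
Qed.

End SampledObservability.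

Theorem lemma5 (R : realType) (n : nat) (A : 'M[R]_n) (C : 'rV[R]_n)
  (t : 'I_n -> nat) :
  (0 < n)%N ->
  observable A C ->
  (forall l : R[i], ceig A l -> l != 0) ->
  (\rank (sample_obs A C t) < n)%N ->
  forall Delta : nat, (0 < Delta)%N -> ~ pathological A Delta ->
  (\rank (sample_obs A C t) <
   \rank (col_mx (sample_obs A C t)
                 (sample_obs A C (fun i => (t i + Delta)%N))))%N.
Proof.
case: n A C t => [//|n] A C t _ obsAC eig_neq0 rank_lt D D_gt0 not_path.
rewrite /pathological /ceig cmxE in eig_neq0 not_path.
have A_unit : A \in unitmx.
  rewrite -(map_unitmx (real_complex R)) unitmx_eigenvalue0.
  by apply/negP => /eig_neq0/eqP.
have deg_le : (degree_mxminpoly A <= degree_mxminpoly (horner_mx A 'X^D))%N.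
  rewrite -!(degree_mxminpoly_map (real_complex R)) map_horner_mx map_polyXn.
  apply: degree_mxminpoly_horner => [a b ea eb | a ea].
    rewrite !hornerXn => abD; have [//|a_neq_b] := eqVneq a b.
    by case: not_path; split=> //; exists a, b; split; [exact: ea|exact: eb|..].
  rewrite derivXn hornerMn hornerXn mulrn_eq0 expf_eq0 negb_or -lt0n D_gt0 /=.
  by rewrite negb_and (eig_neq0 a ea) orbT.
rewrite ltnNge; apply/negP; rewrite sample_obs_shift => /stablemx_rank_col_mx.
have horner_XD : horner_mx A 'X^D = A ^+ D by rewrite rmorphXn /= horner_mx_X.
rewrite -horner_XD => /(stablemx_from_horner_mx deg_le) stableA.
by rewrite (sample_obs_stable_full ord0 obsAC A_unit stableA) ltnn in rank_lt.
Qed.
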